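(* For $k=1,\dots,K$, let $\mathcal{P}^k$ be a family of probability densities on $\mathbb{R}^n$, and let $X^k_1,X^k_2\subset\mathbb{R}^n$ be nonempty closed convex non-intersecting sets, one of them bounded. Let $(x^{1}_{k*},x^{2}_{k*})$ minimize $\|x^1-x^2\|_2$ over $x^1\in X^k_1,x^2\in X^k_2$, and set $h_k=(x^1_{k*}-x^2_{k*})/\|x^1_{k*}-x^2_{k*}\|_2$, $c_k=\tfrac12h_k^T(x^1_{k*}+x^2_{k*})$, $\delta_k=\tfrac12\|x^1_{k*}-x^2_{k*}\|_2$. Given potentials $\eta_1,\dots,\eta_K$, let $\phi^{(K)}(\omega_1,\dots,\omega_K)=\sum_{k=1}^K\eta_k(h_k^T\omega_k-c_k)$. Consider observations $\omega_k=x_k+\xi_k$, $k\le K$, where $(x_k)$ is a deterministic sequence, $\xi_k\sim p_k$ are independent and $(p_k\in\mathcal{P}^k)$ is a deterministic sequence, and the hypotheses $H_\chi:\ x_k\in X^k_\chi$ for all $k\le K$, $\chi=1,2$. Let $\mathcal{T}^\eta_K$ accept $H_1$ when $\phi^{(K)}(\omega_1,\dots,\omega_K)\ge0$ and accept $H_2$ otherwise. Then the risk of $\mathcal{T}^\eta_K$ does not exceed $\prod_{k=1}^K\mathrm{risk}_{\delta_k}(\eta_k|\mathcal{P}^k)$.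
   Context: A potential is an odd, nondecreasing Borel function $\eta:\mathbb{R}\to\mathbb{R}$. For a family $\mathcal{P}$ of probability densities on $\mathbb{R}^n$, $\delta\ge0$ and a potential $\eta$, $\mathrm{risk}_\delta(\eta|\mathcal{P})$ is the smallest $\epsilon$ such that for all unit $e\in\mathbb{R}^n$ and all $p\in\mathcal{P}$: $\int e^{-\eta(\delta+e^T\xi)}p(\xi)d\xi\le\epsilon$ and $\int e^{\eta(e^T\xi-\delta)}p(\xi)d\xi\le\epsilon$. The risk of a test is $\max_{\chi=1,2}$ of the supremum, over all deterministic sequences $x_k\in X^k_\chi$ and $p_k\in\mathcal{P}^k$, $k\le K$, of the probability that the test rejects $H_\chi$. *)

From mathcomp Require Import all_boot all_order all_algebra.
From mathcomp Require Import all_classical all_reals all_analysis.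
Set Implicit Arguments. Unset Strict Implicit. Unset Printing Implicit Defensive.
Import Order.TTheory GRing.Theory Num.Theory numFieldNormedType.Exports.
Local Open Scope classical_set_scope.
Local Open Scope ring_scope.

Section Defs.
Variable R : realType.

Definition dotv n (u v : 'rV[R]_n) : R := (u *m v^T) 0 0.
Definition norm2 n (u : 'rV[R]_n) : R := Num.sqrt (dotv u u).

(* Lebesgue integral over R^n of a nonnegative extended-real function,
   written as the iterated integral over the coordinates (Tonelli). *)
Fixpoint iint (n : nat) : ('rV[R]_n -> \bar R) -> \bar R :=
  match n return ('rV[R]_n -> \bar R) -> \bar R with
  | 0 => fun f => f 0
  | m.+1 => fun f =>
      (\int[@lebesgue_measure R]_(t in [set: R])
          iint (fun v : 'rV[R]_m => f (row_mx (const_mx t : 'rV[R]_1) v)))%E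
  end.

Definition borelRn n : set (set 'rV[R]_n) := <<s [set U : set 'rV[R]_n | open U] >>.

Definition prob_density n (p : 'rV[R]_n -> R) : Prop :=
  (forall x, 0 <= p x) /\
  (forall B : set R, measurable B -> borelRn (p @^-1` B)) /\
  iint (fun x => (p x)%:E) = 1%E.

Definition potential (eta : R -> R) : Prop :=
  measurable_fun [set: R] eta /\
  (forall x, eta (- x) = - eta x) /\
  {homo eta : x y / x <= y}.

Definition risk_delta n (delta : R) (eta : R -> R) (P : set ('rV[R]_n -> R))
  : \bar R :=
  ereal_inf [set eps : \bar R | forall (e : 'rV[R]_n) (p : 'rV[R]_n -> R),
      norm2 e = 1 -> P p ->
      (iint (fun xi => (expR (- eta (delta + dotv e xi)) * p xi)%:E) <= eps)%E /\
      (iint (fun xi => (expR (eta (dotv e xi - delta)) * p xi)%:E) <= eps)%E].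

(* Probability that the test (acceptance region for H_1 given by accept1 on the
   matrix of observations omega, whose k-th row is omega_k) rejects H_chi, when
   omega_k = x_k + xi_k with xi_k ~ p_k independent: integral of the indicator
   against the product density, over R^(K*n). *)
Definition rej_prob K n (accept1 : 'M[R]_(K, n) -> bool) (chi1 : bool)
  (x : 'M[R]_(K, n)) (p : 'I_K -> 'rV[R]_n -> R) : \bar R :=
  iint (fun v : 'rV[R]_(K * n) =>
          let xi := vec_mx v in
          ((if accept1 (x + xi) != chi1 then 1 else 0) *
           \prod_(k < K) p k (row k xi))%:E).

Definition test_risk K n (X1 X2 : 'I_K -> set 'rV[R]_n)
  (P : 'I_K -> set ('rV[R]_n -> R)) (accept1 : 'M[R]_(K, n) -> bool) : \bar R :=
  maxe
    (ereal_sup [set r | exists (x : 'M[R]_(K, n)) (p : 'I_K -> 'rV[R]_n -> R),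
        (forall k, X1 k (row k x)) /\ (forall k, P k (p k)) /\
        r = rej_prob accept1 true x p])
    (ereal_sup [set r | exists (x : 'M[R]_(K, n)) (p : 'I_K -> 'rV[R]_n -> R),
        (forall k, X2 k (row k x)) /\ (forall k, P k (p k)) /\
        r = rej_prob accept1 false x p]).

End Defs.

(* Let d_k = x1_k - x2_k. By the obtuse-angle characterization of nearest points
   of convex sets, <d_k, x - x1_k> >= 0 on X1_k and <d_k, x - x2_k> <= 0 on X2_k,
   so the bisecting hyperplane h_k^T x = c_k separates X1_k and X2_k with margin
   delta_k. Under H_1 the monotone potentials thus give
   phi(x + xi) >= sum_k eta_k (delta_k + h_k^T xi_k), and the Chernoff bound
   [phi < 0] <= exp (- phi) <= prod_k exp (- eta_k (delta_k + h_k^T xi_k))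
   integrates against the product density to at most prod_k risk_delta_k;
   H_2 is symmetric, with exp phi. *)
From mathcomp Require Import all_boot all_order all_algebra.
From mathcomp Require Import all_classical all_reals all_analysis.
From mathcomp Require Import measurable_realfun zify.
From mathcomp.algebra_tactics Require Import ring lra.
Import Order.TTheory GRing.Theory Num.Theory numFieldNormedType.Exports.
Local Open Scope classical_set_scope.
Local Open Scope ring_scope.
Set Implicit Arguments. Unset Strict Implicit. Unset Printing Implicit Defensive.

(* The integrands below need not be measurable. For nonnegative functions the
   integral is the supremum of the integrals of the simple functions below it,
   and monotonicity, the scaling bound and splitting along a measurable set hold
   without measurability. *)
Section NonnegIntegral.
Context d (T : measurableType d) (R : realType) (mu : {measure set T -> \bar R}).
Local Open Scope ereal_scope.
Import HBNNSimple.

Lemma ge0_le_integralT (f g : T -> \bar R) : (forall x, 0 <= f x) ->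
  (forall x, f x <= g x) -> \int[mu]_x f x <= \int[mu]_x g x.
Proof.
move=> f0 fg; have g0 x : 0 <= g x by exact: le_trans (f0 x) (fg x).
rewrite !ge0_integralTE//; apply: ereal_sup_le => _ [s sf <-].
by exists s => // x; exact: le_trans (sf x) (fg x).
Qed.

Lemma ge0_integralZl_leT (k : R) (f : T -> \bar R) : (0 <= k)%R ->
  (forall x, 0 <= f x) -> \int[mu]_x (k%:E * f x) <= k%:E * \int[mu]_x f x.
Proof.
move=> k0 f0; have [->|kn0] := eqVneq k 0%R.
  by rewrite mul0e; under eq_integral do rewrite mul0e; rewrite integral0.
have ki0 : (0 <= k^-1)%R by rewrite invr_ge0.
rewrite !ge0_integralTE//; last by move=> x; rewrite mule_ge0.
apply: ge_ereal_sup => _ [s sf <-].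
rewrite (eq_sintegral (cst k \* scale_nnsfun s ki0)%R); last first.
  by move=> x /=; rewrite mulrA divff ?mul1r.
rewrite sintegralrM; apply: lee_wpmul2l; first by rewrite lee_fin.
apply: ereal_sup_ubound; exists (scale_nnsfun s ki0) => // x /=.
by rewrite EFinM -(mul1e (f x)) -(mulVf kn0) EFinM -muleA lee_wpmul2l ?lee_fin.
Qed.

Lemma ge0_integral_le_splitT (D : set T) (f : T -> \bar R) : measurable D ->
  (forall x, 0 <= f x) ->
  \int[mu]_x f x <= \int[mu]_x (f \_ D) x + \int[mu]_x (f \_ (~` D)) x.
Proof.
move=> mD f0; have mDC : measurable (~` D) by exact: measurableC.
rewrite !ge0_integralTE//; try by move=> x; exact: erestrict_ge0.
apply: ge_ereal_sup => _ [s sf <-].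
rewrite (eq_sintegral (proj_nnsfun s mD \+ proj_nnsfun s mDC)%R); last first.
  move=> x /=; rewrite !mindicE in_setC.
  by case: (x \in D); rewrite /= ?mulr1 ?mulr0 ?addr0 ?add0r.
rewrite sintegralD; apply: leeD; apply: ereal_sup_ubound.
  exists (proj_nnsfun s mD) => // x /=.
  by rewrite /patch mindicE; case: ifP; rewrite /= ?mulr1 ?mulr0.
exists (proj_nnsfun s mDC) => // x /=.
by rewrite /patch mindicE; case: ifP; rewrite /= ?mulr1 ?mulr0.
Qed.

End NonnegIntegral.

Lemma index_allpairs (T1 T2 : eqType) (s : seq T1) (t : seq T2) x y :
  x \in s -> y \in t ->
  index (x, y) [seq (a, b) | a <- s, b <- t] = (index x s * size t + index y t)%N.
Proof.
move=> + yt; elim: s => [//|a s IH] /=; rewrite in_cons index_cat.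
have inj : injective (fun b : T2 => (a, b)) by move=> b1 b2 [].
case: (eqVneq x a) => [->|xa] /= xs.
  by rewrite (mem_map inj) yt (index_map inj).
have -> : (x, y) \in [seq (a, b) | b <- t] = false.
  by apply/negbTE/mapP => -[b _ [] xa']; rewrite xa' eqxx in xa.
by rewrite IH // size_map mulSn addnA.
Qed.

Lemma mxvec_index_val m n (i : 'I_m) (j : 'I_n) :
  mxvec_index i j = (i * n + j)%N :> nat.
Proof.
rewrite /mxvec_index /= /enum_rank enum_rank_in.unlock insubdK; last first.
  by rewrite unfold_in /= cardE index_mem mem_enum.
rewrite enumT unlock /= /prod_enum index_allpairs ?mem_enum //.
by rewrite !index_enum_ord size_enum_ord.
Qed.

Lemma vec_mx_row_mx (T : Type) n K (u : 'rV[T]_n) (w : 'rV[T]_(K * n)) :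
  vec_mx (row_mx u w : 'rV_(K.+1 * n)) = col_mx u (vec_mx w).
Proof.
apply/matrixP => i j; rewrite !mxE.
have := mxvec_index_val i j; have := @mxvec_index_val K n.
case: splitP => [k /= ->|k /= ->]; case: splitP => [i' ->|i' ->] /= idx idxS.
- by rewrite ord1; congr (u 0 _); apply: val_inj; rewrite /= idxS ord1.
- by move: (ltn_ord k); rewrite idxS; lia.
- by move: (ltn_ord k) (ltn_ord j) idxS; rewrite ord1 /=; lia.
- by rewrite mxE; congr (w 0 _); apply: val_inj; rewrite /= idx; move: idxS; lia.
Qed.

Lemma row0_col_mx (T : Type) n K (u : 'rV[T]_n) (M : 'M[T]_(K, n)) :
  row ord0 (col_mx u M : 'M[T]_(K.+1, n)) = u.
Proof.
rewrite (_ : ord0 = lshift K (ord0 : 'I_1)); last exact: val_inj.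
by apply: etrans (rowKu _ _ _) _; apply/rowP => j; rewrite mxE ord1.
Qed.

Lemma row_lift0_col_mx (T : Type) n K (u : 'rV[T]_n) (M : 'M[T]_(K, n)) k :
  row (lift ord0 k) (col_mx u M : 'M[T]_(K.+1, n)) = row k M.
Proof.
by rewrite (_ : lift ord0 k = rshift 1 k); [exact: rowKd | exact: val_inj].
Qed.

Section IteratedIntegral.
Context (R : realType).
Local Open Scope ereal_scope.

Lemma iint_ge0 n (f : 'rV[R]_n -> \bar R) : (forall v, 0 <= f v) -> 0 <= iint f.
Proof.
elim: n f => [|n IH] f f0 /=; first exact: f0.
by apply: integral_ge0 => t _; apply: IH.
Qed.

Lemma le_iint n (f g : 'rV[R]_n -> \bar R) : (forall v, 0 <= f v) ->
  (forall v, f v <= g v) -> iint f <= iint g.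
Proof.
elim: n f g => [|n IH] f g f0 fg /=; first exact: fg.
by apply: ge0_le_integralT => t; [apply: iint_ge0 | apply: IH].
Qed.

Lemma iintZl_le n (k : R) (f : 'rV[R]_n -> \bar R) : (0 <= k)%R ->
  (forall v, 0 <= f v) -> iint (fun v => k%:E * f v) <= k%:E * iint f.
Proof.
move=> k0; elim: n f => [//|n IH] f f0 /=.
apply: le_trans (ge0_integralZl_leT _ k0 (fun t => iint_ge0 (fun v => f0 _))).
by apply: ge0_le_integralT => t; [apply: iint_ge0 => v; rewrite mule_ge0 | apply: IH].
Qed.

Lemma iint_row_mx a b (f : 'rV[R]_(a + b) -> \bar R) :
  iint f = iint (fun u : 'rV[R]_a => iint (fun w : 'rV[R]_b => f (row_mx u w))).
Proof.
elim: a f => [|a IH] f /=.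
  congr iint; apply: funext => w; congr f; apply/rowP => j.
  by rewrite mxE; case: splitP => [[]//|k /= jk]; congr (w ord0 _); apply: val_inj.
congr integral; apply: funext => t; rewrite IH; congr iint; apply: funext => u.
by congr iint; apply: funext => w; rewrite row_mxA castmx_id.
Qed.

Lemma row_mx_const0 n (t : R) (v : 'rV[R]_n) :
  ((row_mx (const_mx t : 'rV[R]_1) v : 'rV[R]_n.+1) 0 0 = t)%R.
Proof. by rewrite mxE; case: splitP => [j _|j /=]; rewrite ?mxE. Qed.

Lemma iint_le_split_sign n (f g1 g2 : 'rV[R]_n.+1 -> \bar R) :
  (forall v, 0 <= f v) -> (forall v, 0 <= g1 v) -> (forall v, 0 <= g2 v) ->
  (forall v : 'rV[R]_n.+1, (v 0 0 <= 0)%R -> f v <= g1 v) ->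
  (forall v : 'rV[R]_n.+1, (0 < v 0 0)%R -> f v <= g2 v) ->
  iint f <= iint g1 + iint g2.
Proof.
move=> f0 g10 g20 fg1 fg2 /=.
pose F t := iint (fun v : 'rV[R]_n => f (row_mx (const_mx t : 'rV[R]_1) v)).
have F0 t : 0 <= F t by apply: iint_ge0.
have := ge0_integral_le_splitT (f := F) (@lebesgue_measure R)
  (measurable_itv `]-oo, 0%R]) F0.
move/le_trans; apply.
apply: leeD; apply: ge0_le_integralT => t; rewrite /patch;
  case: ifPn => [/set_mem/= tD|_] //; try exact: iint_ge0.
- apply: le_iint => // v; apply: fg1; rewrite row_mx_const0.
  by move: tD; rewrite in_itv.
- apply: le_iint => // v; apply: fg2; rewrite row_mx_const0 ltNge.
  by apply: contra_notN tD; rewrite in_itv /= => ->.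
Qed.

(* [0 < B] matters when [C = +oo], as [0 * +oo = 0] in [\bar R]. *)
Lemma iint_mulr_le n (f : 'rV[R]_n -> \bar R) (B C : \bar R) :
  (forall v, 0 <= f v) -> iint f <= B -> 0 < B -> 0 <= C ->
  iint (fun v => f v * C) <= B * C.
Proof.
move=> f0 fB B0; case: C => [c| |] //; last by rewrite gt0_muley ?leey.
rewrite lee_fin => c0; under eq_fun do rewrite muleC.
apply: le_trans (iintZl_le c0 f0) _.
by rewrite [B * _]muleC; apply: lee_wpmul2l; rewrite ?lee_fin.
Qed.

Lemma iint_prod_le n K (g : 'I_K -> 'rV[R]_n -> R) (B : 'I_K -> \bar R) :
  (forall k v, (0 <= g k v)%R) -> (forall k, iint (fun v => (g k v)%:E) <= B k) ->
  (forall k, 0 < B k) ->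
  iint (fun v : 'rV[R]_(K * n) => (\prod_(k < K) g k (row k (vec_mx v)))%:E)
    <= \prod_(k < K) B k.
Proof.
elim: K g B => [|K IH] g B g0 gB B0; first by rewrite /= !big_ord0.
pose G w := (\prod_(k < K) g (lift ord0 k) (row k (vec_mx w)))%:E.
have G0 w : 0 <= G w by rewrite lee_fin prodr_ge0.
have GB : iint G <= \prod_(k < K) B (lift ord0 k).
  by apply: (IH (fun k => g (lift ord0 k))) => k; [apply: g0 | apply: gB | apply: B0].
rewrite big_ord_recl (iint_row_mx (a := n) (b := K * n)).
have g0u u : 0 <= (g ord0 u)%:E by rewrite lee_fin.
have := iint_mulr_le g0u (gB ord0) (B0 ord0) (le_trans (iint_ge0 G0) GB).
apply: le_trans.
apply: le_iint => u; first by apply: iint_ge0 => w; rewrite lee_fin prodr_ge0.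
apply: le_trans (_ : _ <= iint (fun w => (g ord0 u)%:E * G w)) _.
  apply: le_iint => w; first by rewrite lee_fin prodr_ge0.
  rewrite vec_mx_row_mx big_ord_recl EFinM row0_col_mx.
  by under eq_bigr do rewrite row_lift0_col_mx.
apply: le_trans (iintZl_le (g0 ord0 u) G0) _.
by apply: lee_wpmul2l; rewrite ?lee_fin.
Qed.

End IteratedIntegral.

Section Euclidean.
Context (R : realType).

Lemma dotvE n (u v : 'rV[R]_n) : dotv u v = \sum_j u 0 j * v 0 j.
Proof. by rewrite /dotv !mxE; apply: eq_bigr => j _; rewrite !mxE. Qed.

Lemma dotvC n (u v : 'rV[R]_n) : dotv u v = dotv v u.
Proof. by rewrite !dotvE; apply: eq_bigr => j _; rewrite mulrC. Qed.

Lemma dotvDl n (u v w : 'rV[R]_n) : dotv (u + v) w = dotv u w + dotv v w.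
Proof. by rewrite /dotv mulmxDl mxE. Qed.

Lemma dotvZl n a (u w : 'rV[R]_n) : dotv (a *: u) w = a * dotv u w.
Proof. by rewrite /dotv -scalemxAl mxE. Qed.

Lemma dotvNl n (u w : 'rV[R]_n) : dotv (- u) w = - dotv u w.
Proof. by rewrite /dotv mulNmx mxE. Qed.

Lemma dotvDr n (u v w : 'rV[R]_n) : dotv w (u + v) = dotv w u + dotv w v.
Proof. by rewrite dotvC dotvDl !(dotvC w). Qed.

Lemma dotvZr n a (u w : 'rV[R]_n) : dotv w (a *: u) = a * dotv w u.
Proof. by rewrite dotvC dotvZl dotvC. Qed.

Lemma dotvBr n (u v w : 'rV[R]_n) : dotv w (u - v) = dotv w u - dotv w v.
Proof. by rewrite dotvC dotvDl dotvNl !(dotvC w). Qed.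

Lemma dotv_ge0 n (u : 'rV[R]_n) : 0 <= dotv u u.
Proof. by rewrite dotvE; apply: sumr_ge0 => j _; rewrite -expr2 sqr_ge0. Qed.

Lemma norm2_sqr n (u : 'rV[R]_n) : norm2 u ^+ 2 = dotv u u.
Proof. by rewrite /norm2 sqr_sqrtr ?dotv_ge0. Qed.

Lemma norm2N n (u : 'rV[R]_n) : norm2 (- u) = norm2 u.
Proof. by rewrite /norm2 dotvNl dotvC dotvNl opprK. Qed.

Lemma norm2Z n a (u : 'rV[R]_n) : 0 <= a -> norm2 (a *: u) = a * norm2 u.
Proof.
move=> a0; rewrite /norm2 dotvZl dotvZr mulrA -expr2 sqrtrM ?sqr_ge0 //.
by rewrite sqrtr_sqr ger0_norm.
Qed.

Lemma norm2_gt0 n (u : 'rV[R]_n) : u != 0 -> 0 < norm2 u.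
Proof.
apply: contraNT; rewrite /norm2 sqrtr_gt0 -leNgt => uu0; apply/eqP/rowP => j.
have : dotv u u = 0 by apply/eqP; rewrite eq_le uu0 dotv_ge0.
rewrite dotvE => /(psumr_eq0P (fun i _ => sqr_ge0 (u 0 i)))/(_ j isT)/eqP.
by rewrite mulf_eq0 orbb mxE => /eqP.
Qed.

Lemma norm2_normalize n (u : 'rV[R]_n) : u != 0 -> norm2 ((norm2 u)^-1 *: u) = 1.
Proof.
move=> u0; have u_gt0 := norm2_gt0 u0.
by rewrite norm2Z ?invr_ge0 ?ltW // mulVf // gt_eqF.
Qed.

Lemma dotv_delta n (i : 'I_n) (v : 'rV[R]_n) : dotv (delta_mx 0 i) v = v 0 i.
Proof.
rewrite dotvE (bigD1 i) //= big1 => [|j ji]; first by rewrite !mxE !eqxx mul1r addr0.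
by rewrite mxE (negbTE ji) andbF mul0r.
Qed.

Lemma norm2_delta n (i : 'I_n) : norm2 (delta_mx 0 i : 'rV[R]_n) = 1.
Proof. by rewrite /norm2 dotv_delta mxE !eqxx sqrtr1. Qed.

Lemma le_norm2_dotv n (u v : 'rV[R]_n) :
  norm2 u <= norm2 v -> dotv u u <= dotv v v.
Proof. by move=> uv; rewrite -!norm2_sqr ler_pXn2r // nnegrE sqrtr_ge0. Qed.

Lemma dotv_ge0_of_segment_min n (d w : 'rV[R]_n) :
  (forall t : R, 0 < t -> t <= 1 -> dotv d d <= dotv (d + t *: w) (d + t *: w)) ->
  0 <= dotv d w.
Proof.
move=> dmin; rewrite leNgt; apply/negP => dw0.
set a := dotv d w in dw0; set b := dotv w w.
have b0 : 0 <= b := dotv_ge0 w.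
have ba : 0 < b - a by rewrite subr_gt0 (lt_le_trans dw0).
(* [t] lies below the minimizer [-a/b] of [t |-> |d + t w|^2] *)
set t := - a / (b - a).
have t0 : 0 < t by rewrite divr_gt0 // oppr_gt0.
have t1 : t <= 1 by rewrite ler_pdivrMr // mul1r; lra.
have tba : t * (b - a) = - a by rewrite divfK // gt_eqF.
move: (dmin t t0 t1); rewrite !(dotvDl, dotvDr, dotvZl, dotvZr) (dotvC w d) -/a -/b.
nra.
Qed.

Lemma nearest_point_dotv_ge0 n (A : set 'rV[R]_n) (a z x : 'rV[R]_n) :
  convex_set (A : set (convex_lmodType 'rV[R]_n)) -> A a ->
  (forall y, A y -> norm2 (a - z) <= norm2 (y - z)) -> A x ->
  0 <= dotv (a - z) (x - a).
Proof.
move=> Aconv Aa amin Ax; apply: dotv_ge0_of_segment_min => t t0 t1.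
have /set_mem Aconvt := Aconv x a (Itv01 (ltW t0) t1) (mem_set Ax) (mem_set Aa).
have := le_norm2_dotv (amin _ Aconvt).
suff -> : conv (Itv01 (ltW t0) t1) (x : convex_lmodType 'rV[R]_n) a - z
        = a - z + t *: (x - a) by [].
by apply/rowP => j; rewrite !mxE /= /unstable.onem; ring.
Qed.

End Euclidean.

Section Separator.
Context (R : realType) (n : nat) (x1 x2 : 'rV[R]_n).
Hypothesis x12 : x1 != x2.
Local Notation N := (norm2 (x1 - x2)).
Local Notation h := (N^-1 *: (x1 - x2)).
Local Notation c := (2^-1 * dotv h (x1 + x2)).

Let N_gt0 : 0 < N. Proof. by rewrite norm2_gt0 // subr_eq0. Qed.

Let separator_shift y : dotv h y - c =
  N^-1 * (dotv (x1 - x2) (y - x1) + dotv (x1 - x2) (y - x2)) / 2.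
Proof. by rewrite !dotvZl !dotvBr dotvDr; field; rewrite gt_eqF. Qed.

Let invN_dotv : N^-1 * dotv (x1 - x2) (x1 - x2) = N.
Proof. by rewrite -norm2_sqr mulrC expr2 mulrK // unitfE gt_eqF. Qed.

Lemma separator_ge x : 0 <= dotv (x1 - x2) (x - x1) -> 2^-1 * N <= dotv h x - c.
Proof.
move=> x_side; rewrite separator_shift.
have -> : dotv (x1 - x2) (x - x2) =
    dotv (x1 - x2) (x - x1) + dotv (x1 - x2) (x1 - x2).
  by rewrite -dotvDr addrA subrK.
rewrite !mulrDr invN_dotv.
have : 0 <= N^-1 * dotv (x1 - x2) (x - x1) by rewrite mulr_ge0 // invr_ge0 ltW.
lra.
Qed.

Lemma separator_le x : 0 <= dotv (x2 - x1) (x - x2) -> dotv h x - c <= - (2^-1 * N).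
Proof.
rewrite -[x2 - x1]opprB dotvNl oppr_ge0 => x_side; rewrite separator_shift.
have -> : dotv (x1 - x2) (x - x1) =
    dotv (x1 - x2) (x - x2) - dotv (x1 - x2) (x1 - x2).
  by rewrite -dotvBr opprB addrA subrK.
rewrite !(mulrDr, mulrN) invN_dotv.
have : N^-1 * dotv (x1 - x2) (x - x2) <= 0 by rewrite mulr_ge0_le0 // invr_ge0 ltW.
lra.
Qed.

End Separator.

Section Risk.
Context (R : realType).
Local Open Scope ereal_scope.

Lemma risk_delta_ge_expN n dl (eta : R -> R) (P : set ('rV[R]_n -> R)) e p :
  norm2 e = 1%R -> P p ->
  iint (fun xi => (expR (- eta (dl + dotv e xi)) * p xi)%:E) <= risk_delta dl eta P.
Proof. by move=> e1 Pp; apply: le_ereal_inf_tmp => y Sy; exact: (Sy e p e1 Pp).1. Qed.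

Lemma risk_delta_ge_exp n dl (eta : R -> R) (P : set ('rV[R]_n -> R)) e p :
  norm2 e = 1%R -> P p ->
  iint (fun xi => (expR (eta (dotv e xi - dl)) * p xi)%:E) <= risk_delta dl eta P.
Proof. by move=> e1 Pp; apply: le_ereal_inf_tmp => y Sy; exact: (Sy e p e1 Pp).2. Qed.

Lemma risk_delta_gt0 n dl (eta : R -> R) (P : set ('rV[R]_n -> R)) :
  (0 < n)%N -> potential eta -> P !=set0 -> (forall p, P p -> prob_density p) ->
  0 < risk_delta dl eta P.
Proof.
case: n P => // n P _ [_ [etaN eta_nd]] [p Pp] dens; have [p0 [_ p1]] := dens p Pp.
pose e : 'rV[R]_n.+1 := delta_mx 0%R 0%R.
(* on either side of the hyperplane [e^T xi = 0] one of the two integrands is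
   at least [expR (- eta dl)] times [p] *)
pose M := expR (- eta dl); have M0 : (0 < M)%R by apply: expR_gt0.
have p_le (E : R) v : (M <= E)%R -> (p v)%:E <= M^-1%:E * (E * p v)%:E.
  by move=> ME; rewrite -EFinM lee_fin ler_pdivlMl // ler_wpM2r.
pose fA v := (expR (- eta (dl + dotv e v)) * p v)%:E.
pose fB v := (expR (eta (dotv e v - dl)) * p v)%:E.
have Mi0 : (0 <= M^-1)%R by rewrite invr_ge0 ltW.
have one_le : 1 <= iint (fun v => M^-1%:E * fA v) + iint (fun v => M^-1%:E * fB v).
  rewrite -p1; apply: iint_le_split_sign => v.
  - by rewrite lee_fin.
  - by rewrite mule_ge0 // lee_fin mulr_ge0 ?expR_ge0.
  - by rewrite mule_ge0 // lee_fin mulr_ge0 ?expR_ge0.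
  - move=> v0; apply: p_le; rewrite ler_expR lerN2 dotv_delta.
    by apply: eta_nd; rewrite gerDl.
  - move=> v0; apply: p_le; rewrite ler_expR -etaN dotv_delta.
    by apply: eta_nd; lra.
have e1 : norm2 e = 1%R by exact: norm2_delta.
rewrite ltNge; apply/negP => r0.
have Mfle f : (forall v, 0 <= f v) -> iint f <= risk_delta dl eta P ->
    iint (fun v => M^-1%:E * f v) <= 0.
  move=> f0 fr; apply: le_trans (iintZl_le Mi0 f0) _.
  by rewrite -(mule0 M^-1%:E) lee_wpmul2l ?lee_fin // (le_trans fr).
have : (1 : \bar R) <= 0.
  apply: le_trans one_le _; rewrite -[0]adde0; apply: leeD; apply: Mfle.
  - by move=> v; rewrite lee_fin mulr_ge0 ?expR_ge0.
  - exact: risk_delta_ge_expN e1 Pp.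
  - by move=> v; rewrite lee_fin mulr_ge0 ?expR_ge0.
  - exact: risk_delta_ge_exp e1 Pp.
by rewrite lee_fin ler10.
Qed.

End Risk.

Lemma rej_prob_le_prod (R : realType) K n (accept1 : 'M[R]_(K, n) -> bool) chi
    (x : 'M[R]_(K, n)) (p a : 'I_K -> 'rV[R]_n -> R) (B : 'I_K -> \bar R) :
  (forall k v, 0 <= p k v) ->
  (forall k, (iint (fun xi => (expR (a k xi) * p k xi)%:E) <= B k)%E) ->
  (forall k, (0 < B k)%E) ->
  (forall xi, accept1 (x + xi) != chi -> 0 <= \sum_k a k (row k xi)) ->
  (rej_prob accept1 chi x p <= \prod_k B k)%E.
Proof.
move=> p0 aB B0 rej_a.
have g0 k v : 0 <= expR (a k v) * p k v by rewrite mulr_ge0 ?expR_ge0.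
apply: le_trans (iint_prod_le g0 aB B0).
apply: le_iint => v; first by rewrite lee_fin mulr_ge0 ?prodr_ge0 //; case: ifP.
rewrite /= lee_fin; case: ifPn => [/rej_a a_ge0|_]; last first.
  by rewrite mul0r prodr_ge0 // => k _; rewrite mulr_ge0 ?expR_ge0.
rewrite mul1r big_split /= -expR_sum ler_peMl ?prodr_ge0 //.
by rewrite (le_trans _ (expR_ge1Dx _)) // lerDl.
Qed.

Lemma test_risk_le_prod_risk (R : realType) K n (P : 'I_K -> set ('rV[R]_n -> R))
    (X1 X2 : 'I_K -> set 'rV[R]_n) (eta : 'I_K -> R -> R)
    (h : 'I_K -> 'rV[R]_n) (c delta : 'I_K -> R) :
  (forall k p, P k p -> forall v, 0 <= p v) ->
  (forall k, {homo eta k : x y / x <= y}) -> (forall k, norm2 (h k) = 1) ->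
  (forall k x, X1 k x -> delta k <= dotv (h k) x - c k) ->
  (forall k x, X2 k x -> dotv (h k) x - c k <= - delta k) ->
  (forall k, (0 < risk_delta (delta k) (eta k) (P k))%E) ->
  (test_risk X1 X2 P
     (fun omega => (0 <= \sum_k eta k (dotv (h k) (row k omega) - c k))%R)
   <= \prod_k risk_delta (delta k) (eta k) (P k))%E.
Proof.
move=> p_ge0 eta_nd h1 margin1 margin2 risk_gt0.
rewrite /test_risk ge_max; apply/andP; split;
  apply: ge_ereal_sup => _ [x [p [Xx [Pp ->]]]].
- apply: (rej_prob_le_prod (a := fun k xi => - eta k (delta k + dotv (h k) xi))).
  + by move=> k; apply: p_ge0.
  + by move=> k; apply: risk_delta_ge_expN.
  + by [].
  move=> xi; rewrite eqb_id -ltNge sumrN oppr_ge0 => /ltW phi_le0.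
  apply: le_trans phi_le0.
  apply: ler_sum => k _; apply: eta_nd.
  by rewrite linearD dotvDr; have := margin1 k _ (Xx k); lra.
- apply: (rej_prob_le_prod (a := fun k xi => eta k (dotv (h k) xi - delta k))).
  + by move=> k; apply: p_ge0.
  + by move=> k; apply: risk_delta_ge_exp.
  + by [].
  move=> xi; rewrite eqbF_neg negbK => phi_ge0; apply: le_trans phi_ge0 _.
  apply: ler_sum => k _; apply: eta_nd.
  by rewrite linearD dotvDr; have := margin2 k _ (Xx k); lra.
Qed.

Theorem corollary2p11 (R : realType) (n K : nat)
  (P : 'I_K -> set ('rV[R]_n -> R))
  (HPdens : forall k p, P k p -> prob_density p)
  (HPne : forall k, P k !=set0)
  (X1 X2 : 'I_K -> set 'rV[R]_n)
  (HX1ne : forall k, X1 k !=set0) (HX2ne : forall k, X2 k !=set0)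
  (HX1cl : forall k, closed (X1 k)) (HX2cl : forall k, closed (X2 k))
  (HX1cv : forall k, convex_set (X1 k : set (convex_lmodType 'rV[R]_n)))
  (HX2cv : forall k, convex_set (X2 k : set (convex_lmodType 'rV[R]_n)))
  (HXdisj : forall k, X1 k `&` X2 k = set0)
  (HXbd : forall k, bounded_set (X1 k) \/ bounded_set (X2 k))
  (x1s x2s : 'I_K -> 'rV[R]_n)
  (Hx1s : forall k, X1 k (x1s k)) (Hx2s : forall k, X2 k (x2s k))
  (Hmin : forall k (y1 y2 : 'rV[R]_n), X1 k y1 -> X2 k y2 ->
            norm2 (x1s k - x2s k) <= norm2 (y1 - y2))
  (eta : 'I_K -> R -> R) (Heta : forall k, potential (eta k)) :
  let h k := (norm2 (x1s k - x2s k))^-1 *: (x1s k - x2s k) in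
  let c k := 2^-1 * dotv (h k) (x1s k + x2s k) in
  let delta k := 2^-1 * norm2 (x1s k - x2s k) in
  let phi (omega : 'M[R]_(K, n)) :=
    \sum_(k < K) eta k (dotv (h k) (row k omega) - c k) in
  (test_risk X1 X2 P (fun omega => (0 <= phi omega)%R)
     <= \prod_(k < K) risk_delta (delta k) (eta k) (P k))%E.
Proof.
(* closedness, boundedness and nonemptiness of the sets only guarantee that the
   minimizing pair exists *)
have x12 k : x1s k != x2s k.
  apply/eqP => e; have : (X1 k `&` X2 k) (x1s k) by split; rewrite // e.
  by rewrite HXdisj.
have p_ge0 k p : P k p -> forall v, 0 <= p v by move=> /HPdens[].
have eta_nd k : {homo eta k : x y / x <= y} by have [_ []] := Heta k.
apply: (test_risk_le_prod_risk p_ge0 eta_nd) => k.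
- by rewrite norm2_normalize // subr_eq0.
- move=> x X1x; apply: (separator_ge (x12 k)).
  by apply: nearest_point_dotv_ge0 (HX1cv k) (Hx1s k) _ X1x => y /Hmin; apply.
- move=> x X2x; apply: (separator_le (x12 k)).
  apply: nearest_point_dotv_ge0 (HX2cv k) (Hx2s k) _ X2x => y X2y.
  by rewrite -norm2N opprB -(norm2N (y - _)) opprB Hmin.
- apply: risk_delta_gt0 (Heta k) (HPne k) (HPdens k).
  rewrite lt0n; apply: contra (x12 k) => /eqP n0; subst n.
  by apply/eqP/rowP => -[].
Qed.
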